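(* Let $f(x,y,z)=5x^2+7y^2+70z^2$. (i) If $n\in\mathbb{N}$ satisfies $n\equiv 1\pmod 4$, or $n\equiv 2\pmod 4$, or $n\equiv 4\pmod 8$, then $70n-2$ is represented by $f$ locally. (ii) If $n\in\mathbb{N}$ satisfies $n\equiv 3\pmod 4$ or $n\equiv 8\pmod{16}$, then $70n-32$ is represented by $f$ locally.
   Context: An integer $m$ is represented by $f$ locally if there exist $x,y,z\in\mathbb{R}$ with $f(x,y,z)=m$ and, for every prime $p$, there exist $x,y,z\in\mathbb{Z}_p$ (the $p$-adic integers) with $f(x,y,z)=m$. *)

From HB Require Import structures.
From mathcomp Require Import all_boot all_order all_algebra.
From mathcomp Require Import reals.
Set Implicit Arguments. Unset Strict Implicit. Unset Printing Implicit Defensive.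
Import Order.TTheory GRing.Theory Num.Theory.
Local Open Scope ring_scope.

Definition f {R : comRingType} (x y z : R) : R :=
  5 * x ^+ 2 + 7 * y ^+ 2 + 70 * z ^+ 2.

(* p-adic integers, as the inverse limit Z_p = lim Z/p^k Z: an element is a
   compatible sequence of residues a k (taken mod p^k, represented by integers)
   with a (k+1) = a k (mod p^k).  Ring operations are componentwise, and two
   elements are equal iff they agree mod p^k at every level k. *)
Definition padic_int (p : nat) (a : nat -> int) : Prop :=
  forall k : nat, (a k.+1 = a k %[mod (p ^ k)%:Z])%Z.

Definition rep_Zp (p : nat) (m : int) : Prop :=
  exists x y z : nat -> int,
    [/\ padic_int p x, padic_int p y, padic_int p z &
      forall k : nat, (f (x k) (y k) (z k) = m %[mod (p ^ k)%:Z])%Z].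

Definition rep_R (R : realType) (m : int) : Prop :=
  exists x y z : R, f x y z = m%:~R.

Definition rep_locally (R : realType) (m : int) : Prop :=
  rep_R R m /\ forall p : nat, prime p -> rep_Zp p m.

(* Over R every m >= 0 is represented, so only the p-adic conditions matter.
   For a prime p other than 2, 5, 7 the form is unimodular at p: a pigeonhole
   count gives a solution mod p in which x or y is a unit mod p, and Hensel's
   lemma lifts that coordinate.  At 5, 7 and 2 a single coordinate suffices:
   70n - 2 and 70n - 32 are 3 mod 5 (a value of 7y^2) and 5 resp. 3 mod 7
   (values of 5x^2), and the congruences on n put them in 2-adic classes
   where 5x^2 = m - 7y^2 - 70z^2 lifts for suitable small y, z; the exceptions
   are n = 4 (mod 8), handled through 70z^2 = 2 * 35z^2, and n = 8 (mod 16),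
   where 70n - 32 is 4^2 times an odd number. *)

From HB Require Import structures.
From mathcomp Require Import all_boot all_order all_algebra.
From mathcomp Require Import reals.
From mathcomp Require Import ring zify.
Import Order.TTheory GRing.Theory Num.Theory.
Local Open Scope ring_scope.

Lemma PoszX (p k : nat) : (p ^ k)%:Z = p%:Z ^+ k.
Proof. by rewrite -!natz natrX. Qed.

Lemma padic_intP (p : nat) (t : nat -> int) :
  padic_int p t <-> forall k, (p%:Z ^+ k %| t k.+1 - t k)%Z.
Proof. by split=> h k; [move/eqP: (h k) | apply/eqP]; rewrite eqz_mod_dvd PoszX. Qed.

Lemma padic_intMl (p : nat) (c : int) (t : nat -> int) :
  padic_int p t -> padic_int p (fun k => c * t k).
Proof. by move/padic_intP=> ht; apply/padic_intP=> k; rewrite -mulrBr dvdz_mull. Qed.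

Lemma padic_int_lift (p : nat) (P : nat -> pred int) (t0 : int) :
  P 0%N t0 ->
  (forall k t, P k t -> exists2 t', P k.+1 t' & (p%:Z ^+ k %| t' - t)%Z) ->
  exists2 t : nat -> int, padic_int p t & forall k, P k (t k).
Proof.
move=> P0 lift.
have step k t : exists t', P k t ==> P k.+1 t' && (p%:Z ^+ k %| t' - t)%Z.
  case Pkt: (P k t); last by exists t.
  by have [t' ? ?] := lift k t Pkt; exists t'; apply/andP.
pose fix t k := if k is k'.+1 then xchoose (step k' (t k')) else t0.
have tP k : P k (t k).
  by elim: k => //= k IH; case/implyP/(_ IH)/andP: (xchooseP (step k (t k))).
exists t => //; apply/padic_intP=> k.
by case/implyP/(_ (tP k))/andP: (xchooseP (step k (t k))).
Qed.

Definition Zp_sqr_sol (p : nat) (A B : int) : Prop :=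
  exists2 t : nat -> int, padic_int p t &
    forall k, (p%:Z ^+ k %| A * t k ^+ 2 - B)%Z.

Lemma Zp_sqr_solMl (p : nat) (c A B : int) :
  Zp_sqr_sol p A B -> Zp_sqr_sol p (c * A) (c * B).
Proof.
case=> t ht tk; exists t => // k.
by rewrite (_ : _ - _ = c * (A * t k ^+ 2 - B)) ?dvdz_mull //; ring.
Qed.

(* Newton step t' = t - p^(k+e+1) q u, with u an inverse of w mod p; keeping
   t = t0 (mod p^(e+1)) ensures that 2 A t is still p^e times a unit. *)
Lemma hensel_sqr (p e : nat) (A B t0 w : int) :
  2 * A * t0 = p%:Z ^+ e * w -> coprimez w p ->
  (p%:Z ^+ e.*2.+1 %| A * t0 ^+ 2 - B)%Z -> Zp_sqr_sol p A B.
Proof.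
set P := p%:Z; set E := P ^+ e => At0 /coprimezP[[u v] /= uv] Bt0.
have uw : 1 - u * w = v * P by rewrite -uv; ring.
have P_split k : P ^+ (k + e.*2.+1) = P ^+ k * E * E * P.
  by rewrite exprD exprS -addnn exprD; ring.
pose Q k t := (P ^+ (k + e.*2.+1) %| A * t ^+ 2 - B)%Z && (P ^+ e.+1 %| t - t0)%Z.
have [t ht Qt] : exists2 t, padic_int p t & forall k, Q k (t k).
  apply: (@padic_int_lift p Q t0) => [|k t /andP[/dvdzP[q Bt] /dvdzP[d tt0]]].
    by rewrite /Q add0n Bt0 subrr dvdz0.
  rewrite P_split in Bt; rewrite exprSr -/E in tt0.
  pose X := P ^+ k * E * P * (q * u).
  exists (t - X); last by apply/dvdzP; exists (- (E * P * (q * u))); rewrite /X; ring.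
  apply/andP; split; apply/dvdzP.
  - exists (q * v - 2 * A * d * q * u + A * P ^+ k * (q * u) ^+ 2).
    have -> : A * (t - X) ^+ 2 - B = (A * t ^+ 2 - B) * (1 - u * w)
        + ((A * t ^+ 2 - B) * u * w - 2 * A * t0 * X)
        - 2 * A * (t - t0) * X + A * X ^+ 2 by ring.
    by rewrite Bt uw At0 tt0 /X P_split [P ^+ k.+1]exprS; ring.
  - exists (d - P ^+ k * (q * u)).
    have -> : t - X - t0 = (t - t0) - X by ring.
    by rewrite tt0 /X exprSr -/E; ring.
exists t => // k; case/andP: (Qt k) => + _; apply: dvdz_trans.
by rewrite exprD; apply: dvdz_mulr.
Qed.

Lemma coprimez_prime (p : nat) (w : int) :
  prime p -> coprimez w p = ~~ (p%:Z %| w)%Z.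
Proof. by move=> pp; rewrite coprimezE coprime_sym prime_coprime. Qed.

Lemma hensel_sqr_prime (p : nat) (A B t : int) : prime p ->
  ~~ (p%:Z %| 2 * A * t)%Z -> (p%:Z %| A * t ^+ 2 - B)%Z -> Zp_sqr_sol p A B.
Proof.
move=> pp At Bt; apply: (@hensel_sqr p 0 A B t (2 * A * t)).
- by rewrite expr0 mul1r.
- by rewrite coprimez_prime.
- by rewrite expr1.
Qed.

Lemma hensel_sqr_two (A B t : int) :
  ~~ (2 %| A * t)%Z -> (8 %| A * t ^+ 2 - B)%Z -> Zp_sqr_sol 2 A B.
Proof.
move=> At Bt; apply: (@hensel_sqr 2 1 A B t (A * t)) => //.
- by rewrite expr1 mulrA.
- by rewrite coprimez_prime.
Qed.

Lemma rep_ZpP (p : nat) (m : int) :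
  rep_Zp p m <-> exists x y z : nat -> int,
    [/\ padic_int p x, padic_int p y, padic_int p z &
      forall k, (p%:Z ^+ k %| f (x k) (y k) (z k) - m)%Z].
Proof.
split=> -[x [y [z [hx hy hz hk]]]]; exists x, y, z; split=> // k.
  by move/eqP: (hk k); rewrite eqz_mod_dvd PoszX.
by apply/eqP; rewrite eqz_mod_dvd PoszX.
Qed.

Lemma rep_Zp_x (p : nat) (m y z : int) :
  Zp_sqr_sol p 5 (m - 7 * y ^+ 2 - 70 * z ^+ 2) -> rep_Zp p m.
Proof.
case=> t ht tk; apply/rep_ZpP; exists t, (fun=> y), (fun=> z); split=> // k.
by rewrite /f (_ : _ - m = 5 * t k ^+ 2 - (m - 7 * y ^+ 2 - 70 * z ^+ 2)) //; ring.
Qed.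

Lemma rep_Zp_y (p : nat) (m x z : int) :
  Zp_sqr_sol p 7 (m - 5 * x ^+ 2 - 70 * z ^+ 2) -> rep_Zp p m.
Proof.
case=> t ht tk; apply/rep_ZpP; exists (fun=> x), t, (fun=> z); split=> // k.
by rewrite /f (_ : _ - m = 7 * t k ^+ 2 - (m - 5 * x ^+ 2 - 70 * z ^+ 2)) //; ring.
Qed.

Lemma rep_Zp_z (p : nat) (m x y : int) :
  Zp_sqr_sol p 70 (m - 5 * x ^+ 2 - 7 * y ^+ 2) -> rep_Zp p m.
Proof.
case=> t ht tk; apply/rep_ZpP; exists (fun=> x), (fun=> y), t; split=> // k.
by rewrite /f (_ : _ - m = 70 * t k ^+ 2 - (m - 5 * x ^+ 2 - 7 * y ^+ 2)) //; ring.
Qed.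

Lemma rep_ZpMsqr (p : nat) (c m : int) : rep_Zp p m -> rep_Zp p (c ^+ 2 * m).
Proof.
move/rep_ZpP=> [x [y [z [hx hy hz hk]]]]; apply/rep_ZpP.
exists (fun k => c * x k), (fun k => c * y k), (fun k => c * z k).
split; try exact: padic_intMl.
move=> k; rewrite (_ : _ - _ = c ^+ 2 * (f (x k) (y k) (z k) - m)) ?dvdz_mull //.
by rewrite /f; ring.
Qed.

Lemma eq_of_dvdz_sqrB (p i j : nat) : prime p -> (i + j < p)%N ->
  (p%:Z %| i%:Z ^+ 2 - j%:Z ^+ 2)%Z -> i = j.
Proof.
move=> pp ijp; rewrite (_ : _ - _ = (i%:Z - j%:Z) * (i + j)%N%:Z); last first.
  by rewrite PoszD; ring.
rewrite dvdzE abszM Euclid_dvdM // => /orP[pij | pij].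
  apply/eqP; rewrite -distn_eq0; apply: contraLR pij; rewrite -lt0n => ij0.
  by rewrite gtnNdvd //; lia.
case: (posnP (i + j)) => [|ij0]; first lia.
by move: pij; rewrite gtnNdvd.
Qed.

Lemma binary_form_surj_mod (p : nat) (A C c : int) :
  prime p -> odd p -> coprimez A p -> coprimez C p ->
  exists a b : int, (p%:Z %| A * a ^+ 2 + C * b ^+ 2 - c)%Z.
Proof.
move=> pp p_odd cAp cCp; have p_gt0 := prime_gt0 pp.
have res_lt v : (`|(v %% p)%Z| < p)%N by lia.
pose res v : 'I_p := Ordinal (res_lt v).
have resP v w : res v = res w -> (p%:Z %| v - w)%Z.
  move/(congr1 (Posz \o val)) => /=.
  have p_neq0 : p%:Z != 0 by rewrite eqz_nat -lt0n.
  by rewrite !gez0_abs ?modz_ge0 // -eqz_mod_dvd => ->.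
pose k := p.+1./2.
have sqr_inj B (i j : 'I_k) :
    coprimez B p -> (p%:Z %| B * (i%:Z ^+ 2 - j%:Z ^+ 2))%Z -> i = j.
  move=> cBp; rewrite Gauss_dvdzr 1?coprimez_sym // => /eq_of_dvdz_sqrB ij.
  by apply/val_inj/ij => //; have := ltn_ord i; have := ltn_ord j; lia.
(* The k values A i^2 and the k values c - C j^2 are distinct mod p and
   2k > p, so the two sets meet. *)
pose S1 := [set res (A * i%:Z ^+ 2) | i : 'I_k].
pose S2 := [set res (c - C * i%:Z ^+ 2) | i : 'I_k].
have inj1 : injective (fun i : 'I_k => res (A * i%:Z ^+ 2)).
  by move=> i j /resP; rewrite -mulrBr; apply: sqr_inj.
have inj2 : injective (fun i : 'I_k => res (c - C * i%:Z ^+ 2)).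
  move=> i j /resP; rewrite (_ : _ - _ = C * (j%:Z ^+ 2 - i%:Z ^+ 2)); last ring.
  by move/(sqr_inj C) => ->.
have /set0Pn[x] : S1 :&: S2 != set0.
  apply: contraTneq (max_card (S1 :|: S2)) => S12; rewrite -ltnNge.
  by rewrite cardsU S12 cards0 !card_imset // !card_ord /k; lia.
rewrite inE => /andP[/imsetP[i _ ->] /imsetP[j _ /resP hij]].
by exists i, j; rewrite (_ : _ - c = A * i%:Z ^+ 2 - (c - C * j%:Z ^+ 2)) //; ring.
Qed.

Lemma rep_Zp_odd_prime (p : nat) (m : int) :
  prime p -> p != 2%N -> p != 5%N -> p != 7%N -> rep_Zp p m.
Proof.
move=> pp p2 p5 p7.
have cop q : prime q -> p != q -> coprimez q%:Z p.
  by move=> qp pq; rewrite coprimez_prime // dvdzE /= dvdn_prime2.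
have odd_p : odd p by case/even_prime: (pp) p2 => [->|].
have [c2 c5 c7] : [/\ coprimez 2 p, coprimez 5 p & coprimez 7 p] by split; apply: cop.
(* Make c = m - 70 z0^2 a unit mod p, so that a or b below is a unit too. *)
have [z0 cz0] : exists z0 : int, ~~ (p%:Z %| m - 70 * z0 ^+ 2)%Z.
  case: (boolP (p%:Z %| m)%Z) => pm; last by exists 0; rewrite expr0n mulr0 subr0.
  exists 1; apply/negP => pm70.
  have : coprimez (2 * 5 * 7) p by rewrite !coprimezMl c2 c5 c7.
  rewrite coprimez_prime // (_ : 2 * 5 * 7 = m - (m - 70 * 1 ^+ 2)); last by ring.
  by rewrite rpredB.
have [a [b ab]] := @binary_form_surj_mod p 5 7 (m - 70 * z0 ^+ 2) pp odd_p c5 c7.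
case: (boolP (p%:Z %| a)%Z) => pa.
- apply: (@rep_Zp_y _ _ a z0); apply: (@hensel_sqr_prime _ _ _ b) => //.
    rewrite -coprimez_prime // !coprimezMl c2 c7 coprimez_prime //=.
    apply: contra cz0 => pb.
    set s := 5 * a ^+ 2 + 7 * b ^+ 2 in ab *.
    rewrite (_ : m - _ = s - (s - (m - 70 * z0 ^+ 2))); last by ring.
    by rewrite rpredB // rpredD // dvdz_mull // expr2 dvdz_mull.
  by rewrite (_ : _ - _ = 5 * a ^+ 2 + 7 * b ^+ 2 - (m - 70 * z0 ^+ 2)) //; ring.
- apply: (@rep_Zp_x _ _ b z0); apply: (@hensel_sqr_prime _ _ _ a) => //.
    by rewrite -coprimez_prime // !coprimezMl c2 c5 coprimez_prime.
  by rewrite (_ : _ - _ = 5 * a ^+ 2 + 7 * b ^+ 2 - (m - 70 * z0 ^+ 2)) //; ring.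
Qed.

Lemma rep_Z2_mod8 (m : int) : (m %% 8 != 0)%Z -> (m %% 8 != 6)%Z -> rep_Zp 2 m.
Proof.
move=> m0 m6.
(* 5 + 7y^2 + 70z^2 is 5, 4, 1, 3, 2, 7 mod 8 at
   (y, z) = (0, 0), (1, 0), (2, 0), (0, 1), (1, 1), (2, 1). *)
have rep_of y z : (8 %| 5 * 1 ^+ 2 - (m - 7 * y ^+ 2 - 70 * z ^+ 2))%Z -> rep_Zp 2 m.
  by move=> h; apply: (@rep_Zp_x _ _ y z); apply: (@hensel_sqr_two _ _ 1).
have : (m %% 8 = 1 \/ m %% 8 = 2 \/ m %% 8 = 3 \/
        m %% 8 = 4 \/ m %% 8 = 5 \/ m %% 8 = 7)%Z by lia.
case=> [h|[h|[h|[h|[h|h]]]]];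
  [apply: (rep_of 2 0) | apply: (rep_of 1 1) | apply: (rep_of 0 1)
  | apply: (rep_of 1 0) | apply: (rep_of 0 0) | apply: (rep_of 2 1)]; lia.
Qed.

Lemma rep_Z2_6mod16 (m : int) : (m %% 16 = 6)%Z -> rep_Zp 2 m.
Proof.
move=> m6; have /dvdzP[m' em] : (2 %| m)%Z by lia.
apply: (@rep_Zp_z _ _ 0 0).
have -> : m - 5 * 0 ^+ 2 - 7 * 0 ^+ 2 = 2 * m' by rewrite em; ring.
rewrite (_ : 70 = 2 * 35) //; apply: Zp_sqr_solMl.
by apply: (@hensel_sqr_two _ _ 1) => //; lia.
Qed.

Lemma rep_Z5 (m : int) : (m %% 5)%Z \in [:: 2; 3] -> rep_Zp 5 m.
Proof.
rewrite mem_seq2 => /orP[]/eqP m5; apply: (@rep_Zp_y _ _ 0 0).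
- by apply: (@hensel_sqr_prime _ _ _ 1) => //; lia.
- by apply: (@hensel_sqr_prime _ _ _ 2) => //; lia.
Qed.

Lemma rep_Z7 (m : int) : (m %% 7)%Z \in [:: 3; 5; 6] -> rep_Zp 7 m.
Proof.
rewrite mem_seq3 => /or3P[]/eqP m7; apply: (@rep_Zp_x _ _ 0 0).
- by apply: (@hensel_sqr_prime _ _ _ 3) => //; lia.
- by apply: (@hensel_sqr_prime _ _ _ 1) => //; lia.
- by apply: (@hensel_sqr_prime _ _ _ 2) => //; lia.
Qed.

Lemma rep_R_ge0 (R : realType) (m : int) : 0 <= m -> rep_R R m.
Proof.
move=> m_ge0; exists (Num.sqrt (m%:~R / 5)), 0, 0.
rewrite /f sqr_sqrtr ?divr_ge0 ?ler0z //.
by rewrite expr0n /=; field.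
Qed.

Lemma rep_locally_of_Z2_mod5_mod7 (R : realType) (m : int) : 0 <= m -> rep_Zp 2 m ->
  (m %% 5)%Z \in [:: 2; 3] -> (m %% 7)%Z \in [:: 3; 5; 6] -> rep_locally R m.
Proof.
move=> m_ge0 m2 m5 m7; split=> [|p pp]; first exact: rep_R_ge0.
case: (eqVneq p 2) => [->//|p2].
case: (eqVneq p 5) => [->|p5]; first exact: rep_Z5.
case: (eqVneq p 7) => [->|p7]; first exact: rep_Z7.
exact: rep_Zp_odd_prime.
Qed.

Theorem lemma4p1 (R : realType) :
  (forall n : nat,
     [|| n %% 4 == 1, n %% 4 == 2 | n %% 8 == 4]%N ->
     rep_locally R (70 * n%:Z - 2)) /\
  (forall n : nat,
     [|| n %% 4 == 3 | n %% 16 == 8]%N ->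
     rep_locally R (70 * n%:Z - 32)).
Proof.
split=> n hn; apply: rep_locally_of_Z2_mod5_mod7; rewrite ?mem_seq2 ?mem_seq3; try lia.
- case/or3P: hn => /eqP hn;
    [apply: rep_Z2_mod8 | apply: rep_Z2_mod8 | apply: rep_Z2_6mod16]; lia.
- case/orP: hn => /eqP hn; first by apply: rep_Z2_mod8; lia.
  have /dvdzP[m' em] : (16 %| 70 * n%:Z - 32)%Z by lia.
  rewrite em (_ : m' * 16 = 4 ^+ 2 * m'); last by ring.
  by apply/rep_ZpMsqr/rep_Z2_mod8; lia.
Qed.
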